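(* Let $G$ be a bipartite simple graph with stable sets $X=\{x_i\}_{i=1}^s$ and $Y=\{y_j\}_{j=1}^t$, and suppose $G\cong H_1\oplus H_2$ is a decomposition of $G$. If $G$ is edge-magic (respectively, super edge-magic), then $S_2(G;H_1,H_2)$ is edge-magic (respectively, super edge-magic).
   Context: For a $(p,q)$-graph $G$ ($p$ vertices, $q$ edges), an edge-magic labeling is a bijection $f:V(G)\cup E(G)\to[1,p+q]$ such that $f(x)+f(xy)+f(y)$ is constant for every edge $xy$; it is super edge-magic if moreover $f(V(G))=[1,p]$. A decomposition $G\cong H_1\oplus H_2$ means $H_1,H_2$ are subgraphs of $G$ whose edge sets partition $E(G)$. $S_2(G;H_1,H_2)$ is the graph with vertex set $X\cup Y\cup X'\cup Y'$, where $X'=\{x_i'\}_{i=1}^s$ and $Y'=\{y_j'\}_{j=1}^t$ are new vertices, and edge set $E(G)\cup\{x_iy_j' : x_iy_j\in E(H_1)\}\cup\{x_i'y_j : x_iy_j\in E(H_2)\}$. *)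

From mathcomp Require Import all_boot.
Set Implicit Arguments. Unset Strict Implicit. Unset Printing Implicit Defensive.

(* A simple graph is a finite vertex type V with a symmetric irreflexive
   adjacency relation r.  Its edge set consists of the 2-subsets {x,y}. *)
Definition edges (V : finType) (r : rel V) : {set {set V}} :=
  [set e : {set V} | [exists x : V, exists y : V, r x y && (e == [set x; y])]].

(* (f, g) is an edge-magic labeling of the (p,q)-graph (V, r):
   the combined labeling of V ∪ E(G) (vertices by f, edges by g) is a
   bijection onto [1, p+q], and f x + g {x,y} + f y is constant on edges. *)
Definition edge_magic_labeling (V : finType) (r : rel V)
    (f : V -> nat) (g : {set V} -> nat) : Prop :=
  let p := #|V| in let q := #|edges r| in
  [/\
      (injective f /\
      {in edges r &, injective g} /\
      (forall v e, e \in edges r -> f v <> g e)),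
      (forall v, 1 <= f v <= p + q),
      (forall e, e \in edges r -> 1 <= g e <= p + q),
      (forall k, 1 <= k <= p + q ->
         (exists v, f v = k) \/ (exists2 e, e \in edges r & g e = k)) &
      (exists c, forall x y, r x y -> f x + g [set x; y] + f y = c)].

Definition edge_magic (V : finType) (r : rel V) : Prop :=
  exists f g, edge_magic_labeling r f g.

Definition super_edge_magic (V : finType) (r : rel V) : Prop :=
  exists f g, [/\ edge_magic_labeling r f g,
                  (forall v, 1 <= f v <= #|V|) &
                  (forall k, 1 <= k <= #|V| -> exists v, f v = k)].

(* Bipartite graph with stable sets X = {x_i : i < s} (inl i) and
   Y = {y_j : j < t} (inr j); b i j means x_i y_j is an edge. *)
Definition bip_rel (s t : nat) (b : 'I_s -> 'I_t -> bool) : rel ('I_s + 'I_t) :=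
  fun u v => match u, v with
  | inl i, inr j => b i j
  | inr j, inl i => b i j
  | _, _ => false
  end.

Definition decomposition (s t : nat) (b h1 h2 : 'I_s -> 'I_t -> bool) : Prop :=
  forall i j, (b i j = h1 i j || h2 i j) /\ ~~ (h1 i j && h2 i j).

(* S_2(G; H1, H2): vertices inl u are the original X ∪ Y, vertices
   inr (inl i) = x_i', inr (inr j) = y_j'. *)
Definition S2_rel (s t : nat) (b h1 h2 : 'I_s -> 'I_t -> bool)
    : rel (('I_s + 'I_t) + ('I_s + 'I_t)) :=
  fun u v => match u, v with
  | inl u', inl v' => bip_rel b u' v'
  | inl (inl i), inr (inr j) => h1 i j          (* x_i y_j' *)
  | inr (inr j), inl (inl i) => h1 i j
  | inr (inl i), inl (inr j) => h2 i j          (* x_i' y_j *)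
  | inl (inr j), inr (inl i) => h2 i j
  | _, _ => false
  end.

(* Label an original vertex v of S_2(G;H_1,H_2) by 2f(v) and its copy v' by
   2f(v) - 1; label an edge of G by 2g(e) - 1 and its unique lift through a
   copy (x_i y_j' if it lies in H_1, x_i' y_j if it lies in H_2) by 2g(e).
   Every edge of S_2 has at most one copy endpoint, so each edge sum is
   2(f(x) + g(xy) + f(y)) - 1, and the labels 2k - 1, 2k for k in [1, p+q]
   exhaust [1, 2(p+q)], with [1, 2p] used by the vertices if f(V) = [1, p]. *)
From mathcomp Require Import all_boot.
From mathcomp Require Import zify.
Set Implicit Arguments.
Unset Strict Implicit.
Unset Printing Implicit Defensive.
Set Bullet Behavior "Strict Subproofs".

Lemma card_bij_labels (V U : finType) (B : {set U}) (f : V -> nat)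
    (g : U -> nat) (M : nat) :
  injective f -> {in B &, injective g} ->
  (forall v e, e \in B -> f v <> g e) ->
  (forall v, 1 <= f v <= M) -> (forall e, e \in B -> 1 <= g e <= M) ->
  (forall k, 1 <= k <= M -> (exists v, f v = k) \/ (exists2 e, e \in B & g e = k)) ->
  M = #|V| + #|B|.
Proof.
move=> fI gI fg_neq fM gM onto.
pose labels := map f (enum V) ++ map g (enum B).
have labels_uniq : uniq labels.
  rewrite cat_uniq (map_inj_uniq fI) enum_uniq /=.
  rewrite map_inj_in_uniq ?enum_uniq => [|e e']; last by rewrite !mem_enum; apply: gI.
  rewrite andbT; apply/hasPn => _ /mapP [e e_in ->].
  by apply/negP => /mapP [v _ /esym]; apply: fg_neq; rewrite -mem_enum.
have labels_iota : perm_eq labels (iota 1 M).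
  apply: uniq_perm => //; first exact: iota_uniq.
  move=> k; rewrite mem_iota mem_cat; apply/idP/idP.
    case/orP => /mapP [x x_in ->]; first by move: (fM x); lia.
    by rewrite mem_enum in x_in; move: (gM x x_in); lia.
  move=> k_range; have [[v <-]|[e eB <-]] := onto k ltac:(lia).
    by rewrite map_f ?mem_enum.
  by rewrite orbC map_f ?mem_enum.
rewrite -(size_iota 1 M) -(perm_size labels_iota) size_cat !size_map.
by rewrite cardT enumT cardE.
Qed.

Lemma edge_magic_labeling_intro (V : finType) (r : rel V) (f : V -> nat)
    (g : {set V} -> nat) (M : nat) :
  injective f -> {in edges r &, injective g} ->
  (forall v e, e \in edges r -> f v <> g e) ->
  (forall v, 1 <= f v <= M) -> (forall e, e \in edges r -> 1 <= g e <= M) ->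
  (forall k, 1 <= k <= M ->
     (exists v, f v = k) \/ (exists2 e, e \in edges r & g e = k)) ->
  (exists c, forall x y, r x y -> f x + g [set x; y] + f y = c) ->
  edge_magic_labeling r f g.
Proof.
move=> fI gI fg_neq fM gM onto magic.
have M_card := card_bij_labels fI gI fg_neq fM gM onto.
by split=> //; rewrite -M_card.
Qed.

(* [2 n] if [o] holds and [2 n - 1] otherwise, [~~ o] being coerced to 0 or 1. *)
Definition dlabel (o : bool) (n : nat) : nat := 2 * n - ~~ o.

Lemma dlabel_inj o o' m n : 0 < m -> 0 < n ->
  dlabel o m = dlabel o' n -> o = o' /\ m = n.
Proof. by rewrite /dlabel; case: o; case: o' => /=; lia. Qed.

Lemma dlabel_bound o n N : 1 <= n <= N -> 1 <= dlabel o n <= 2 * N.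
Proof. by rewrite /dlabel; case: o => /=; lia. Qed.

Lemma dlabel_onto k N : 1 <= k <= 2 * N ->
  exists o n, 1 <= n <= N /\ k = dlabel o n.
Proof.
move=> k_range; exists (~~ odd k), ((k + 1) %/ 2).
by rewrite /dlabel; case: (boolP (odd k)) => k_odd /=; lia.
Qed.

Lemma edges_mem (W : finType) (r : rel W) x y :
  r x y -> [set x; y] \in edges r.
Proof.
by move=> xy; rewrite inE; apply/existsP; exists x; apply/existsP; exists y;
  rewrite xy eqxx.
Qed.

Section S2Structure.
Variables (s t : nat) (b h1 h2 : 'I_s -> 'I_t -> bool).
Hypothesis dec : decomposition b h1 h2.
Local Notation V := ('I_s + 'I_t)%type.
Local Notation V2 := (V + V)%type.
Local Notation G := (bip_rel b).
Local Notation S2 := (S2_rel b h1 h2).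

Definition is_orig (v : V2) : bool := if v is inl _ then true else false.
Definition orig (v : V2) : V := match v with inl w | inr w => w end.
Definition orig_set (e : {set V2}) : {set V} := orig @: e.
Definition all_orig (e : {set V2}) : bool := e \subset [set v | is_orig v].

Lemma orig_set2 x y : orig_set [set x; y] = [set orig x; orig y].
Proof. by rewrite /orig_set imsetU1 imset_set1. Qed.

Lemma all_orig2 x y : all_orig [set x; y] = is_orig x && is_orig y.
Proof. by rewrite /all_orig subUset !sub1set !inE. Qed.

Lemma orig_inj u v : is_orig u = is_orig v -> orig u = orig v -> u = v.
Proof. by case: u => u; case: v => v //= _ ->. Qed.

Lemma h1_sub i j : h1 i j -> b i j.
Proof. by rewrite (proj1 (dec i j)) => ->. Qed.

Lemma h2_sub i j : h2 i j -> b i j.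
Proof. by rewrite (proj1 (dec i j)) orbC => ->. Qed.

Lemma S2_rel_orig x y :
  S2 x y -> G (orig x) (orig y) /\ (is_orig x || is_orig y).
Proof.
by case: x => [[i|j]|[i|j]]; case: y => [[i'|j']|[i'|j']] //=;
  auto using h1_sub, h2_sub.
Qed.

Lemma bip_edgeP e :
  e \in edges G -> exists i j, b i j /\ e = [set inl i; inr j].
Proof.
rewrite inE => /existsP [x /existsP [y /andP [xy /eqP ->]]].
case: x xy => [i|j]; case: y => [i'|j'] //= bij; first by exists i, j'.
by exists i', j; rewrite setUC.
Qed.

Lemma bip_pair_inj i j i' j' :
  [set inl i; inr j] = [set inl i'; inr j'] :> {set V} -> i = i' /\ j = j'.
Proof.
move/setP => eq_ij; split.
  by move: (eq_ij (inl i)); rewrite !inE eqxx => /esym /orP [/eqP [] | /eqP].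
by move: (eq_ij (inr j)); rewrite !inE eqxx orbT => /esym /orP [/eqP | /eqP []].
Qed.

Lemma h2_not_h1 i j : h2 i j -> h1 i j = false.
Proof. by move: (proj2 (dec i j)) => /[swap] ->; rewrite andbT => /negbTE. Qed.

Definition lift_edge i j (o : bool) : {set V2} :=
  if o then [set inl (inl i); inl (inr j)]
  else if h1 i j then [set inl (inl i); inr (inr j)]
  else [set inr (inl i); inl (inr j)].

Lemma lift_edge_S2 i j o : b i j -> lift_edge i j o \in edges S2.
Proof.
move=> bij; rewrite /lift_edge; case: o; first exact: edges_mem.
case: ifP => h1ij; apply: edges_mem => //=.
by move: bij; rewrite (proj1 (dec i j)) h1ij.
Qed.

Lemma orig_set_lift_edge i j o : orig_set (lift_edge i j o) = [set inl i; inr j].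
Proof. by rewrite /lift_edge; case: o; case: (h1 i j); rewrite orig_set2. Qed.

Lemma all_orig_lift_edge i j o : all_orig (lift_edge i j o) = o.
Proof. by rewrite /lift_edge; case: o; case: (h1 i j); rewrite all_orig2. Qed.

Lemma S2_edgeP e :
  e \in edges S2 -> exists i j o, b i j /\ e = lift_edge i j o.
Proof.
rewrite inE => /existsP [x /existsP [y /andP [xy /eqP ->]]].
case: x xy => [[i|j]|[i|j]]; case: y => [[i'|j']|[i'|j']] //= hxy.
- by exists i, j', true.
- by exists i, j', false; rewrite /lift_edge hxy h1_sub.
- by exists i', j, true; rewrite setUC.
- by exists i', j, false; rewrite /lift_edge h2_not_h1 // h2_sub // setUC.
- by exists i, j', false; rewrite /lift_edge h2_not_h1 // h2_sub.
- by exists i', j, false; rewrite /lift_edge hxy h1_sub // setUC.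
Qed.

Lemma S2_edge_orig e : e \in edges S2 -> orig_set e \in edges G.
Proof.
by case/S2_edgeP => i [j [o [bij ->]]]; rewrite orig_set_lift_edge; apply: edges_mem.
Qed.

Lemma S2_edge_inj e e' : e \in edges S2 -> e' \in edges S2 ->
  orig_set e = orig_set e' -> all_orig e = all_orig e' -> e = e'.
Proof.
case/S2_edgeP => i [j [o [_ ->]]]; case/S2_edgeP => i' [j' [o' [_ ->]]].
rewrite !orig_set_lift_edge !all_orig_lift_edge => /bip_pair_inj [-> ->].
by move=> ->.
Qed.

Lemma bip_edge_lift e o : e \in edges G ->
  exists2 e', e' \in edges S2 & orig_set e' = e /\ all_orig e' = o.
Proof.
case/bip_edgeP => i [j [bij ->]]; exists (lift_edge i j o); first exact: lift_edge_S2.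
by rewrite orig_set_lift_edge all_orig_lift_edge.
Qed.

Definition lift_vertex (o : bool) (w : V) : V2 := if o then inl w else inr w.

Definition S2_vlabel (f : V -> nat) (v : V2) : nat := dlabel (is_orig v) (f (orig v)).
Definition S2_elabel (g : {set V} -> nat) (e : {set V2}) : nat :=
  dlabel (~~ all_orig e) (g (orig_set e)).

Lemma S2_vlabel_lift f o w : S2_vlabel f (lift_vertex o w) = dlabel o (f w).
Proof. by case: o. Qed.

Lemma S2_vlabel_onto f n :
  (forall w, 1 <= f w <= n) -> (forall k, 1 <= k <= n -> exists w, f w = k) ->
  (forall v, 1 <= S2_vlabel f v <= 2 * n) /\
  (forall k, 1 <= k <= 2 * n -> exists v, S2_vlabel f v = k).
Proof.
move=> fn onto; split=> [v|k /dlabel_onto [o [m [m_range ->]]]].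
  exact: dlabel_bound.
by have [w <-] := onto m m_range; exists (lift_vertex o w); rewrite S2_vlabel_lift.
Qed.

Lemma S2_edge_magic_labeling f g : edge_magic_labeling G f g ->
  edge_magic_labeling S2 (S2_vlabel f) (S2_elabel g).
Proof.
case=> [[fI [gI fg_neq]] fM gM onto [c magic]].
move: fM gM onto; set N := (X in forall v, _ <= _ <= X) => fM gM onto.
have f_gt0 v : 0 < f v by case/andP: (fM v).
have g_gt0 e : e \in edges G -> 0 < g e by move/gM/andP=> [].
apply: (@edge_magic_labeling_intro _ _ _ _ (2 * N)).
- move=> u v /(dlabel_inj (f_gt0 _) (f_gt0 _)) [o_eq /fI]; exact: orig_inj.
- move=> e e' eS2 e'S2 /(dlabel_inj (g_gt0 _ (S2_edge_orig eS2))).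
  case/(_ (g_gt0 _ (S2_edge_orig e'S2))) => o_eq /gI g_eq.
  by apply: S2_edge_inj (negb_inj o_eq) => //; apply: g_eq; apply: S2_edge_orig.
- move=> v e eS2 /(dlabel_inj (f_gt0 _) (g_gt0 _ (S2_edge_orig eS2))) [_].
  exact/fg_neq/S2_edge_orig.
- by move=> v; apply: dlabel_bound.
- by move=> e /S2_edge_orig /gM; apply: dlabel_bound.
- move=> k /dlabel_onto [o [n [n_range ->]]].
  have [[w <-]|[e eG <-]] := onto n n_range.
    by left; exists (lift_vertex o w); rewrite S2_vlabel_lift.
  have [e' e'S2 [<- o_eq]] := bip_edge_lift (~~ o) eG.
  by right; exists e'; rewrite // /S2_elabel o_eq negbK.
- exists (2 * c - 1) => x y /S2_rel_orig [xy x_or_y].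
  have := magic _ _ xy; have := g_gt0 _ (edges_mem xy).
  have := f_gt0 (orig x); have := f_gt0 (orig y).
  rewrite /S2_elabel /S2_vlabel /dlabel all_orig2 orig_set2.
  by move: x_or_y; case: (is_orig x); case: (is_orig y) => // _ /=; lia.
Qed.

End S2Structure.

Theorem mainTheorem7 (s t : nat) (b h1 h2 : 'I_s -> 'I_t -> bool) :
  decomposition b h1 h2 ->
  (edge_magic (bip_rel b) -> edge_magic (S2_rel b h1 h2)) /\
  (super_edge_magic (bip_rel b) -> super_edge_magic (S2_rel b h1 h2)).
Proof.
move=> dec; split=> [[f [g lab]] | [f [g [lab fV ontoV]]]].
  by exists (S2_vlabel f), (S2_elabel g); apply: S2_edge_magic_labeling.
have [fV2 ontoV2] := S2_vlabel_onto fV ontoV.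
exists (S2_vlabel f), (S2_elabel g); rewrite card_sum addnn -mul2n.
by split=> //; apply: S2_edge_magic_labeling.
Qed.
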